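(* Let $n_i:=2^{2^i}$ and $t_n:=1/n$. If $100\le i<j$ then $f_{n_i}(t_{n_j})=0$ and $B_{n_j}(f_{n_i},t_{n_j})\ge -\frac{9}{8n_j}$.
   Context: Nodes: $x_{k,n}:=2k/n-1$, $k=0,\dots,n$. $B_n(f,x):=N_n(f,x)/D_n(x)$ for $x$ not a node, $B_n(f,x_{k,n}):=f(x_{k,n})$, with $N_n(f,x)=\sum_{k=0}^n(-1)^k\frac{f(x_{k,n})}{x-x_{k,n}}$, $D_n(x)=\sum_{k=0}^n(-1)^k\frac{1}{x-x_{k,n}}$. For $m$ such that $\sqrt m$ is an integer multiple of $4$, define $f_m:\mathbb{R}\to\mathbb{R}$ by: $f_m(x)=0$ for $x<1/m$ or $x\ge(\sqrt m-3)/m$; $f_m(x)=x-1/m$ for $1/m\le x<2/m$; $f_m(x)=\frac{4p+3}{m}-x$ for $0\le p\le\frac{\sqrt m-8}{4}$ and $\frac{4p+2}{m}\le x<\frac{4p+4}{m}$; $f_m(x)=x-\frac{4p+1}{m}$ for $1\le p\le\frac{\sqrt m-8}{4}$ and $\frac{4p}{m}\le x<\frac{4p+2}{m}$; $f_m(x)=x-\frac{\sqrt m-3}{m}$ for $\frac{\sqrt m-4}{m}\le x<\frac{\sqrt m-3}{m}$. *)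

From Stdlib Require Import Reals Lra ClassicalEpsilon.
Open Scope R_scope.

Definition dec (P : Prop) : bool :=
  if excluded_middle_informative P then true else false.

Definition pick_nat (P : nat -> Prop) : nat :=
  match excluded_middle_informative (exists p, P p) with
  | left H => proj1_sig (constructive_indefinite_description P H)
  | right _ => 0%nat
  end.

Definition node (n k : nat) : R := 2 * INR k / INR n - 1.

Definition Nn (n : nat) (f : R -> R) (x : R) : R :=
  sum_f_R0 (fun k => (-1) ^ k * f (node n k) / (x - node n k)) n.

Definition Dn (n : nat) (x : R) : R :=
  sum_f_R0 (fun k => (-1) ^ k / (x - node n k)) n.

Definition Bn (n : nat) (f : R -> R) (x : R) : R :=
  if dec (exists k : nat, (k <= n)%nat /\ x = node n k) then f x
  else Nn n f x / Dn n x.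

Definition dn_piece (m x : R) (p : nat) : Prop :=
  0 <= INR p <= (sqrt m - 8) / 4 /\ (4 * INR p + 2) / m <= x < (4 * INR p + 4) / m.

Definition up_piece (m x : R) (p : nat) : Prop :=
  1 <= INR p <= (sqrt m - 8) / 4 /\ (4 * INR p) / m <= x < (4 * INR p + 2) / m.

(* f_m (meant for m with sqrt m an integer multiple of 4) *)
Definition fm (m x : R) : R :=
  if dec (x < 1 / m \/ (sqrt m - 3) / m <= x) then 0
  else if dec (1 / m <= x < 2 / m) then x - 1 / m
  else if dec (exists p, dn_piece m x p) then
    (4 * INR (pick_nat (dn_piece m x)) + 3) / m - x
  else if dec (exists p, up_piece m x p) then
    x - (4 * INR (pick_nat (up_piece m x)) + 1) / m
  else if dec ((sqrt m - 4) / m <= x < (sqrt m - 3) / m) then x - (sqrt m - 3) / m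
  else 0.

Definition ni (i : nat) : nat := (2 ^ (2 ^ i))%nat.

Definition tn (n : nat) : R := 1 / INR n.

(* Here m = n_i = (4K + 8)^2 and N = n_j = 4 m M with M = 2^(2^j - 2^i - 2);
   write t = 1/N.  No node equals t, the nodes 2k/N - 1 with k <= N/2 lie in
   (-oo, 0] where f_m vanishes, and D_N(t) is N times the sum of two partial
   sums of Leibniz's series for pi/4, hence at least 4N/3.  The numerator
   N_N(f_m, t) is N times the alternating sum of T(l) = f_m(2l/N) / (2l - 1),
   l = 1 .. N/2.  Each unit interval [q/m, (q+1)/m] contains the three grid
   points 2l/N, l = 2r, 2r+1, 2r+2, with q = r div M, and f_m is affine there
   with slope in [-1, 1] and |f_m| <= 1/m; this bounds the second differences
   of T by (1/m + 2/N)(w r - w (r+1)) with w r = 1/(4 max(r, M) - 1), where w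
   is constant for r < M because f_m vanishes on [0, 1/m].  Pairing the
   alternating sum and telescoping gives N_N(f_m, t) >= -1, so
   B_N(f_m, t) >= -3/(4N). *)

From Stdlib Require Import Reals Lra Lia ClassicalEpsilon.
Open Scope R_scope.

Lemma dec_true (P : Prop) : P -> dec P = true.
Proof. intro H. unfold dec. destruct (excluded_middle_informative P); easy. Qed.

Lemma dec_false (P : Prop) : ~ P -> dec P = false.
Proof. intro H. unfold dec. destruct (excluded_middle_informative P); easy. Qed.

Lemma dec_iff (P Q : Prop) : (P <-> Q) -> dec P = dec Q.
Proof.
  intro HPQ. destruct (excluded_middle_informative Q) as [HQ | HQ].
  - rewrite !dec_true; tauto.
  - rewrite !dec_false; tauto.
Qed.

Lemma pick_nat_spec (P : nat -> Prop) : (exists p, P p) -> P (pick_nat P).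
Proof.
  intro H. unfold pick_nat. destruct (excluded_middle_informative (exists p, P p)).
  - exact (proj2_sig (constructive_indefinite_description P e)).
  - contradiction.
Qed.

Lemma pick_nat_unique (P : nat -> Prop) (p : nat) :
  P p -> (forall q, P q -> q = p) -> pick_nat P = p.
Proof. intros Hp Huniq. apply Huniq, pick_nat_spec. now exists p. Qed.

Lemma Rdiv_le_iff (m a x : R) : 0 < m -> a / m <= x <-> a <= m * x.
Proof.
  intro Hm. assert (E : m * (a / m) = a) by (field; lra). split; intro H; nra.
Qed.

Lemma Rlt_div_iff (m a x : R) : 0 < m -> x < a / m <-> m * x < a.
Proof.
  intro Hm. assert (E : m * (a / m) = a) by (field; lra). split; intro H; nra.
Qed.

Lemma INR_lt_succ_le (p q : nat) : INR p < INR q + 1 -> (p <= q)%nat.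
Proof. rewrite <- S_INR. intro H. apply INR_lt in H. lia. Qed.

Section Zigzag.

Variables (m : R) (K : nat).
Hypothesis sqrt_m : sqrt m = 4 * INR K + 8.

Lemma zigzag_m_pos : 0 < m.
Proof.
  destruct (Rle_lt_dec m 0) as [Hm | Hm]; [| exact Hm].
  rewrite sqrt_neg_0 in sqrt_m by exact Hm. pose proof (pos_INR K). lra.
Qed.

Lemma zigzag_m_ge : 4 * INR K + 5 <= m.
Proof.
  pose proof zigzag_m_pos. pose proof (pos_INR K).
  rewrite <- (sqrt_sqrt m), sqrt_m by lra. nra.
Qed.

Lemma dn_piece_iff x p :
  dn_piece m x p <-> (p <= K)%nat /\ 4 * INR p + 2 <= m * x < 4 * INR p + 4.
Proof.
  unfold dn_piece. rewrite sqrt_m, Rdiv_le_iff, Rlt_div_iff by exact zigzag_m_pos.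
  split.
  - intros [[_ Hp] Hx]. split; [apply INR_le; lra | exact Hx].
  - intros [Hp Hx]. apply le_INR in Hp. pose proof (pos_INR p). lra.
Qed.

Lemma up_piece_iff x p :
  up_piece m x p <-> (1 <= p <= K)%nat /\ 4 * INR p <= m * x < 4 * INR p + 2.
Proof.
  unfold up_piece. rewrite sqrt_m, Rdiv_le_iff, Rlt_div_iff by exact zigzag_m_pos.
  split.
  - intros [[H1 Hp] Hx]. split; [split; apply INR_le; simpl; lra | exact Hx].
  - intros [[H1 Hp] Hx]. apply le_INR in H1, Hp. simpl in H1. lra.
Qed.

Lemma fm_scaled x :
  fm m x =
  if dec (m * x < 1 \/ 4 * INR K + 5 <= m * x) then 0
  else if dec (1 <= m * x < 2) then x - 1 / m
  else if dec (exists p, dn_piece m x p) then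
    (4 * INR (pick_nat (dn_piece m x)) + 3) / m - x
  else if dec (exists p, up_piece m x p) then
    x - (4 * INR (pick_nat (up_piece m x)) + 1) / m
  else if dec (4 * INR K + 4 <= m * x < 4 * INR K + 5) then x - (4 * INR K + 5) / m
  else 0.
Proof.
  unfold fm. rewrite sqrt_m.
  replace (4 * INR K + 8 - 3) with (4 * INR K + 5) by ring.
  replace (4 * INR K + 8 - 4) with (4 * INR K + 4) by ring.
  rewrite (dec_iff (x < 1 / m \/ _ <= x) (m * x < 1 \/ 4 * INR K + 5 <= m * x)),
    (dec_iff (1 / m <= x < 2 / m) (1 <= m * x < 2)),
    (dec_iff (_ / m <= x < _ / m) (4 * INR K + 4 <= m * x < 4 * INR K + 5));
    [reflexivity | ..]; rewrite ?Rdiv_le_iff, ?Rlt_div_iff by exact zigzag_m_pos; tauto.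
Qed.

Lemma fm_outside x : m * x < 1 \/ 4 * INR K + 5 <= m * x -> fm m x = 0.
Proof. intro Hx. rewrite fm_scaled, dec_true by exact Hx. reflexivity. Qed.

Lemma fm_first x : 1 <= m * x < 2 -> fm m x = x - 1 / m.
Proof.
  intro Hx. pose proof (pos_INR K).
  rewrite fm_scaled, dec_false, dec_true by lra. reflexivity.
Qed.

Lemma fm_down x p : (p <= K)%nat -> 4 * INR p + 2 <= m * x < 4 * INR p + 4 ->
  fm m x = (4 * INR p + 3) / m - x.
Proof.
  intros Hp Hx. pose proof (pos_INR p). pose proof (le_INR _ _ Hp).
  assert (Hpiece : dn_piece m x p) by (apply dn_piece_iff; auto).
  rewrite fm_scaled, !dec_false, dec_true by (eauto; lra).
  rewrite (pick_nat_unique _ p Hpiece); [reflexivity |].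
  intros q Hq. apply dn_piece_iff in Hq as [_ Hq].
  apply Nat.le_antisymm; apply INR_lt_succ_le; lra.
Qed.

Lemma fm_up x p : (1 <= p <= K)%nat -> 4 * INR p <= m * x < 4 * INR p + 2 ->
  fm m x = x - (4 * INR p + 1) / m.
Proof.
  intros Hp Hx. pose proof (le_INR _ _ (proj1 Hp)). pose proof (le_INR _ _ (proj2 Hp)).
  simpl in *.
  assert (Hpiece : up_piece m x p) by (apply up_piece_iff; auto).
  assert (Hno_dn : ~ exists q, dn_piece m x q).
  { intros [q Hq]. apply dn_piece_iff in Hq as [_ Hq].
    assert (q < p)%nat by (apply INR_lt; lra).
    assert (p <= q)%nat by (apply INR_lt_succ_le; lra). lia. }
  rewrite fm_scaled, !dec_false, dec_true by (eauto; lra).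
  rewrite (pick_nat_unique _ p Hpiece); [reflexivity |].
  intros q Hq. apply up_piece_iff in Hq as [_ Hq].
  apply Nat.le_antisymm; apply INR_lt_succ_le; lra.
Qed.

Lemma fm_last x : 4 * INR K + 4 <= m * x < 4 * INR K + 5 ->
  fm m x = x - (4 * INR K + 5) / m.
Proof.
  intro Hx.
  assert (Hno_dn : ~ exists q, dn_piece m x q).
  { intros [q Hq]. apply dn_piece_iff in Hq as [Hq Hq']. apply le_INR in Hq. lra. }
  assert (Hno_up : ~ exists q, up_piece m x q).
  { intros [q Hq]. apply up_piece_iff in Hq as [[_ Hq] Hq']. apply le_INR in Hq. lra. }
  pose proof (pos_INR K).
  rewrite fm_scaled, !dec_false, dec_true by (auto; lra). reflexivity.
Qed.

Lemma fm_le_1 x : m * x <= 1 -> fm m x = 0.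
Proof.
  intro Hx. destruct (Rle_lt_or_eq_dec _ _ Hx) as [Hlt | Heq].
  - apply fm_outside. now left.
  - pose proof zigzag_m_pos. rewrite fm_first by lra.
    replace x with (1 / m) by (rewrite <- Heq; field; lra). ring.
Qed.

Lemma fm_first_closed x : 1 <= m * x <= 2 -> fm m x = x - 1 / m.
Proof.
  intros [H1 H2]. pose proof zigzag_m_pos.
  destruct (Rle_lt_or_eq_dec _ _ H2) as [Hlt | Heq]; [now apply fm_first |].
  rewrite (fm_down x 0) by (simpl; lia || lra).
  replace x with (2 / m) by (rewrite <- Heq; field; lra). simpl. field; lra.
Qed.

Lemma fm_down_closed x p : (p <= K)%nat -> 4 * INR p + 2 <= m * x <= 4 * INR p + 4 ->
  fm m x = (4 * INR p + 3) / m - x.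
Proof.
  intros Hp [H1 H2]. pose proof zigzag_m_pos.
  destruct (Rle_lt_or_eq_dec _ _ H2) as [Hlt | Heq]; [now apply fm_down |].
  assert (Ex : x = (4 * INR p + 4) / m) by (rewrite <- Heq; field; lra).
  destruct (Nat.eq_dec p K) as [-> | HpK].
  - rewrite fm_last by lra. rewrite Ex. field; lra.
  - rewrite (fm_up x (S p)) by (rewrite ?S_INR; lia || lra).
    rewrite S_INR, Ex. field; lra.
Qed.

Lemma fm_up_closed x p : (1 <= p <= K)%nat -> 4 * INR p <= m * x <= 4 * INR p + 2 ->
  fm m x = x - (4 * INR p + 1) / m.
Proof.
  intros Hp [H1 H2]. pose proof zigzag_m_pos.
  destruct (Rle_lt_or_eq_dec _ _ H2) as [Hlt | Heq]; [now apply fm_up |].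
  rewrite (fm_down x p) by (lia || lra).
  replace x with ((4 * INR p + 2) / m) by (rewrite <- Heq; field; lra). field; lra.
Qed.

Lemma fm_last_closed x : 4 * INR K + 4 <= m * x <= 4 * INR K + 5 ->
  fm m x = x - (4 * INR K + 5) / m.
Proof.
  intros [H1 H2]. pose proof zigzag_m_pos.
  destruct (Rle_lt_or_eq_dec _ _ H2) as [Hlt | Heq]; [now apply fm_last |].
  rewrite fm_outside by lra.
  replace x with ((4 * INR K + 5) / m) by (rewrite <- Heq; field; lra). field; lra.
Qed.

Lemma fm_affine_on_unit (q : nat) :
  exists a b, Rabs a <= 1 /\ forall x, INR q <= m * x <= INR q + 1 -> fm m x = a * x + b.
Proof.
  pose proof (pos_INR K).
  assert (Hslope1 : Rabs 1 <= 1) by (rewrite Rabs_R1; lra).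
  destruct (Nat.le_gt_cases (4 * K + 5) q) as [Hq | Hq].
  { exists 0, 0. split; [rewrite Rabs_R0; lra |]. intros x [Hx _].
    apply le_INR in Hq. rewrite plus_INR, mult_INR in Hq. simpl in Hq.
    rewrite fm_outside by lra. ring. }
  destruct (Nat.eq_dec q 0) as [-> | Hq0].
  { exists 0, 0. split; [rewrite Rabs_R0; lra |]. intros x [_ Hx]. simpl in Hx.
    rewrite fm_le_1 by lra. ring. }
  destruct (Nat.eq_dec q 1) as [-> | Hq1].
  { exists 1, (- (1 / m)). split; [exact Hslope1 |]. intros x Hx. simpl in Hx.
    rewrite fm_first_closed by lra. ring. }
  destruct (Nat.eq_dec q (4 * K + 4)) as [-> | Hq4].
  { exists 1, (- ((4 * INR K + 5) / m)). split; [exact Hslope1 |]. intros x Hx.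
    rewrite plus_INR, mult_INR in Hx. simpl in Hx. rewrite fm_last_closed by lra. ring. }
  assert (Hdiv : q = (4 * (q / 4) + q mod 4)%nat) by (apply Nat.div_mod; lia).
  pose proof (Nat.mod_upper_bound q 4 ltac:(lia)).
  set (p := (q / 4)%nat) in *. set (r := (q mod 4)%nat) in *.
  assert (Eq : INR q = 4 * INR p + INR r).
  { rewrite Hdiv at 1. rewrite plus_INR, mult_INR. simpl. ring. }
  rewrite Eq.
  destruct (Nat.lt_ge_cases r 2) as [Hr | Hr].
  - assert (Hr' : INR 0 <= INR r <= INR 1) by (split; apply le_INR; lia). simpl in Hr'.
    exists 1, (- ((4 * INR p + 1) / m)). split; [exact Hslope1 |]. intros x Hx.
    rewrite (fm_up_closed x p) by (lia || lra). ring.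
  - assert (Hr' : INR 2 <= INR r <= INR 3) by (split; apply le_INR; lia). simpl in Hr'.
    exists (-1), ((4 * INR p + 3) / m). split; [rewrite Rabs_left; lra |].
    intros x Hx. rewrite (fm_down_closed x p) by (lia || lra). ring.
Qed.

Lemma fm_abs_le x : Rabs (fm m x) <= / m.
Proof.
  pose proof zigzag_m_pos as Hm. pose proof (Rinv_0_lt_compat m Hm).
  assert (Hnear : forall c, -1 <= m * x - c <= 1 -> Rabs (x - c / m) <= / m).
  { intros c Hc. apply Rabs_le.
    replace (x - c / m) with ((m * x - c) * / m) by (field; lra). nra. }
  rewrite fm_scaled. unfold dec.
  destruct (excluded_middle_informative _); [rewrite Rabs_R0; lra |].
  destruct (excluded_middle_informative _); [apply Hnear; lra |].
  destruct (excluded_middle_informative _) as [Hdn | _].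
  { apply pick_nat_spec, dn_piece_iff in Hdn as [_ Hdn].
    rewrite Rabs_minus_sym. apply Hnear. lra. }
  destruct (excluded_middle_informative _) as [Hup | _].
  { apply pick_nat_spec, up_piece_iff in Hup as [_ Hup]. apply Hnear. lra. }
  destruct (excluded_middle_informative _); [apply Hnear; lra | rewrite Rabs_R0; lra].
Qed.

End Zigzag.

Lemma sum_f_R0_rev (f : nat -> R) n :
  sum_f_R0 f n = sum_f_R0 (fun k => f (n - k)%nat) n.
Proof.
  revert f. induction n as [| n IH]; intro f; [reflexivity |].
  rewrite (decomp_sum (fun k => f (S n - k)%nat)) by lia. simpl pred.
  rewrite Nat.sub_0_r. change (sum_f_R0 f (S n)) with (sum_f_R0 f n + f (S n)).
  rewrite (IH f), Rplus_comm. reflexivity.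
Qed.

Lemma pow_m1_sub_even (a j : nat) : (j <= 2 * a)%nat -> (-1) ^ (2 * a - j) = (-1) ^ j.
Proof.
  intro Hj.
  assert (Hsum : (-1) ^ (2 * a - j) * (-1) ^ j = 1)
    by (rewrite <- pow_add, Nat.sub_add, pow_1_even by exact Hj; reflexivity).
  assert (Hsq : (-1) ^ j * (-1) ^ j = 1)
    by (rewrite <- pow_add, <- pow_1_even with j; f_equal; lia).
  transitivity ((-1) ^ (2 * a - j) * ((-1) ^ j * (-1) ^ j)); [rewrite Hsq; ring |].
  rewrite <- Rmult_assoc, Hsum. ring.
Qed.

(* For the node [x = 2l/N = node N (N/2 + l)], this is [f x / (N * (x - tn N))]. *)
Definition node_ratio (f : R -> R) (N l : nat) : R := f (2 * INR l / INR N) / (2 * INR l - 1).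

Lemma INR_4S n : INR (4 * S n) = 4 * (INR n + 1).
Proof. rewrite mult_INR, (S_INR n). simpl (INR 4). ring. Qed.

Lemma tn_sub_node n k :
  tn (4 * S n) - node (4 * S n) k = (4 * INR n + 5 - 2 * INR k) / INR (4 * S n).
Proof. unfold tn, node. rewrite INR_4S. pose proof (pos_INR n). field. lra. Qed.

Lemma tn_not_node n k : tn (4 * S n) <> node (4 * S n) k.
Proof.
  intro E. pose proof (tn_sub_node n k) as D. rewrite E, Rminus_diag, INR_4S in D.
  pose proof (pos_INR n).
  assert (Hk : INR (2 * k) = INR (4 * n + 5)).
  { rewrite mult_INR, plus_INR, mult_INR. simpl (INR 2). simpl (INR 4). simpl (INR 5).
    apply (Rmult_eq_reg_r (/ (4 * (INR n + 1)))); [| apply Rinv_neq_0_compat; lra].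
    unfold Rdiv in D. lra. }
  apply INR_eq in Hk. lia.
Qed.

Lemma Dn_tn n :
  Dn (4 * S n) (tn (4 * S n)) =
  INR (4 * S n) * (sum_f_R0 (tg_alt PI_tg) (2 * S n) + sum_f_R0 (tg_alt PI_tg) (S (2 * n))).
Proof.
  unfold Dn. rewrite (tech2 _ (2 * S n) (4 * S n)) by lia.
  replace (4 * S n - S (2 * S n))%nat with (S (2 * n)) by lia.
  rewrite Rmult_plus_distr_l, !scal_sum. pose proof (pos_INR n).
  f_equal; [rewrite sum_f_R0_rev |]; apply sum_eq; intros j Hj;
    rewrite tn_sub_node; unfold tg_alt, PI_tg; pose proof (pos_INR j).
  - rewrite pow_m1_sub_even by lia.
    rewrite INR_4S, minus_INR, !mult_INR, plus_INR, mult_INR, (S_INR n) by lia.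
    simpl (INR 1). simpl (INR 2). field. lra.
  - replace (S (2 * S n) + j)%nat with (2 * S n + S j)%nat by lia.
    rewrite INR_4S, pow_add, pow_1_even, !plus_INR, !mult_INR, (S_INR n), (S_INR j).
    simpl (INR 1). simpl (INR 2). simpl pow. field. lra.
Qed.

Lemma Nn_tn n (f : R -> R) : (forall x, x <= 0 -> f x = 0) ->
  Nn (4 * S n) f (tn (4 * S n)) =
  INR (4 * S n) * sum_f_R0 (fun l => (-1) ^ l * node_ratio f (4 * S n) (S l)) (S (2 * n)).
Proof.
  intro Hf. unfold Nn. rewrite (tech2 _ (2 * S n) (4 * S n)) by lia.
  replace (4 * S n - S (2 * S n))%nat with (S (2 * n)) by lia.
  pose proof (pos_INR n).
  rewrite sum_eq_R0, Rplus_0_l, scal_sum.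
  - apply sum_eq. intros l Hl. pose proof (pos_INR l).
    replace (S (2 * S n) + l)%nat with (2 * S n + S l)%nat by lia.
    assert (Hnode : node (4 * S n) (2 * S n + S l) = 2 * INR (S l) / INR (4 * S n)).
    { unfold node. rewrite INR_4S, plus_INR, !mult_INR, (S_INR n), (S_INR l).
      simpl (INR 2). field. lra. }
    rewrite tn_sub_node, Hnode. unfold node_ratio.
    rewrite INR_4S, pow_add, pow_1_even, plus_INR, mult_INR, (S_INR n), (S_INR l).
    simpl (INR 2). simpl pow. field. lra.
  - intros k Hk. rewrite Hf; [unfold Rdiv; ring |].
    apply le_INR in Hk. unfold node. rewrite INR_4S.
    rewrite mult_INR, (S_INR n) in Hk. simpl (INR 2) in *.
    apply Rle_minus, Rdiv_le_iff; lra.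
Qed.

Lemma leibniz_partial_sum_ge n : 2 / 3 <= sum_f_R0 (tg_alt PI_tg) n.
Proof.
  destruct (Nat.Even_or_Odd n) as [[k ->] | [k ->]].
  - pose proof (PI_ineq k). pose proof PI2_3_2. lra.
  - replace (2 * k + 1)%nat with (S (2 * k)) by lia.
    apply Rle_trans with (sum_f_R0 (tg_alt PI_tg) (S (2 * 0))).
    + unfold tg_alt, PI_tg. simpl. lra.
    + apply (tech9 (fun N => sum_f_R0 (tg_alt PI_tg) (S (2 * N)))); [| lia].
      exact (CV_ALT_step0 _ PI_tg_decreasing).
Qed.

Lemma alt_sum_ge_of_second_diff (T w : nat -> R) n :
  (forall r, T (2 * r)%nat - 2 * T (2 * r + 1)%nat + T (2 * r + 2)%nat <= w r - w (S r)) ->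
  T 0%nat - T (2 * n + 2)%nat - (w 0%nat - w (S n)) <=
  2 * sum_f_R0 (fun l => (-1) ^ l * T (S l)) (S (2 * n)).
Proof.
  intro Hdiff. induction n as [| n IH].
  - specialize (Hdiff 0%nat). simpl in *. lra.
  - specialize (Hdiff (S n)).
    replace (S (2 * S n)) with (S (S (S (2 * n)))) by lia.
    change (sum_f_R0 ?f (S (S ?k))) with (sum_f_R0 f k + f (S k) + f (S (S k))).
    replace (S (S (S (2 * n)))) with (2 * S n + 1)%nat by lia.
    replace (S (S (2 * n))) with (2 * S n)%nat by lia.
    rewrite pow_1_even, pow_add, pow_1_even. simpl pow.
    replace (S (2 * S n + 1)) with (2 * S n + 2)%nat by lia.
    replace (S (2 * S n)) with (2 * S n + 1)%nat by lia.
    replace (2 * n + 2)%nat with (2 * S n)%nat in IH by lia.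
    lra.
Qed.

Lemma second_diff_over_odd_le (c h e1 e2 y : R) : 3 <= y -> Rabs c <= e1 -> Rabs h <= e2 ->
  (c - h) / (y - 2) - 2 * (c / y) + (c + h) / (y + 2) <= (e1 + e2) * (/ (y - 2) - / (y + 2)).
Proof.
  intros Hy Hc Hh.
  set (Q := / ((y - 2) * (y + 2))).
  assert (HQ : 0 < Q) by (apply Rinv_0_lt_compat; nra).
  replace ((c - h) / (y - 2) - 2 * (c / y) + (c + h) / (y + 2))
    with (4 * Q * (c * (2 / y) - h)) by (unfold Q; field; lra).
  replace (/ (y - 2) - / (y + 2)) with (4 * Q) by (unfold Q; field; lra).
  assert (Hy2 : 0 < 2 / y <= 1) by (split; [apply Rdiv_lt_0_compat | apply Rdiv_le_iff]; lra).
  pose proof (Rle_abs c). pose proof (Rabs_pos c).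
  pose proof (Rle_abs (- h)). rewrite Rabs_Ropp in *.
  assert (c * (2 / y) <= Rabs c) by nra.
  nra.
Qed.

Lemma node_ratio_second_diff_affine (f : R -> R) (N r : nat) (a b e : R) :
  0 < INR N -> (1 <= r)%nat -> Rabs a <= 1 -> Rabs (f (2 * INR (2 * r + 1) / INR N)) <= e ->
  (forall l, (2 * r <= l <= 2 * r + 2)%nat ->
     f (2 * INR l / INR N) = a * (2 * INR l / INR N) + b) ->
  let T := node_ratio f N in
  T (2 * r)%nat - 2 * T (2 * r + 1)%nat + T (2 * r + 2)%nat <=
  (e + 2 / INR N) * (/ (4 * INR r - 1) - / (4 * INR r + 3)).
Proof.
  intros HN Hr Ha Hc Hwin T.
  set (c := f (2 * INR (2 * r + 1) / INR N)) in *. set (h := a * (2 / INR N)).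
  assert (Hh : Rabs h <= 2 / INR N).
  { assert (0 < 2 / INR N) by (apply Rdiv_lt_0_compat; lra).
    unfold h. rewrite Rabs_mult, (Rabs_pos_eq (2 / INR N)) by lra. nra. }
  set (X := INR r). assert (HX : 1 <= X) by (apply (le_INR 1); lia).
  assert (E0 : INR (2 * r) = 2 * X) by (rewrite mult_INR; simpl; unfold X; ring).
  assert (E1 : INR (2 * r + 1) = 2 * X + 1) by (rewrite plus_INR, mult_INR; simpl; unfold X; ring).
  assert (E2 : INR (2 * r + 2) = 2 * X + 2) by (rewrite plus_INR, mult_INR; simpl; unfold X; ring).
  assert (F0 : f (2 * INR (2 * r) / INR N) = c - h)
    by (unfold c, h; rewrite !Hwin, E0, E1 by lia; field; lra).
  assert (F2 : f (2 * INR (2 * r + 2) / INR N) = c + h)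
    by (unfold c, h; rewrite !Hwin, E2, E1 by lia; field; lra).
  unfold T, node_ratio. rewrite F0, F2. fold c. rewrite E0, E1, E2.
  replace (2 * (2 * X) - 1) with (4 * X + 1 - 2) by ring.
  replace (2 * (2 * X + 1) - 1) with (4 * X + 1) by ring.
  replace (2 * (2 * X + 2) - 1) with (4 * X + 1 + 2) by ring.
  replace (4 * X - 1) with (4 * X + 1 - 2) by ring.
  replace (4 * X + 3) with (4 * X + 1 + 2) by ring.
  apply second_diff_over_odd_le; [lra | exact Hc | exact Hh].
Qed.

Lemma grid_point_in_unit (m M l q : nat) : (1 <= m)%nat -> (1 <= M)%nat ->
  (2 * M * q <= l <= 2 * M * q + 2 * M)%nat ->
  INR q <= INR m * (2 * INR l / INR (4 * m * M)) <= INR q + 1.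
Proof.
  intros Hm HM [Hl1 Hl2].
  apply le_INR in Hm, HM, Hl1, Hl2. rewrite !mult_INR, ?plus_INR, !mult_INR in *.
  simpl (INR 1) in *. simpl (INR 2) in *. simpl (INR 4).
  replace (INR m * (2 * INR l / ((1 + 1 + 1 + 1) * INR m * INR M)))
    with (INR l / ((1 + 1) * INR M)) by (field; lra).
  assert (INR l / ((1 + 1) * INR M) * ((1 + 1) * INR M) = INR l) by (field; lra).
  pose proof (pos_INR q). nra.
Qed.

Definition tail_weight (M r : nat) : R := / (4 * INR (Nat.max r M) - 1).

Lemma node_ratio_second_diff_le (m K M r : nat) :
  sqrt (INR m) = 4 * INR K + 8 -> (1 <= M)%nat ->
  let T := node_ratio (fm (INR m)) (4 * m * M) in
  T (2 * r)%nat - 2 * T (2 * r + 1)%nat + T (2 * r + 2)%nat <=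
  (/ INR m + 2 / INR (4 * m * M)) * (tail_weight M r - tail_weight M (S r)).
Proof.
  intros Hs HM T. pose proof (zigzag_m_pos _ _ Hs) as Hm.
  assert (Hm1 : (1 <= m)%nat) by (destruct m; [simpl in Hm; lra | lia]).
  destruct (Nat.le_gt_cases (S r) M) as [Hr | Hr].
  - assert (Hzero : forall l, (l <= 2 * M)%nat -> T l = 0).
    { intros l Hl. unfold T, node_ratio. rewrite (fm_le_1 _ K Hs); [unfold Rdiv; ring |].
      enough (INR 0 <= INR m * (2 * INR l / INR (4 * m * M)) <= INR 0 + 1)
        by (simpl in *; lra).
      apply grid_point_in_unit; lia. }
    rewrite !Hzero by lia. unfold tail_weight. rewrite !Nat.max_r by lia. lra.
  - destruct (fm_affine_on_unit (INR m) K Hs (r / M)) as [a [b [Ha Hab]]].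
    unfold tail_weight. rewrite !Nat.max_l, S_INR by lia.
    replace (4 * (INR r + 1) - 1) with (4 * INR r + 3) by ring.
    apply (node_ratio_second_diff_affine _ _ _ a b); [| lia | exact Ha | apply (fm_abs_le _ _ Hs) |].
    + apply lt_0_INR. lia.
    + intros l Hl. apply Hab, grid_point_in_unit; [exact Hm1 | exact HM |].
      pose proof (Nat.div_mod r M ltac:(lia)). pose proof (Nat.mod_upper_bound r M ltac:(lia)).
      nia.
Qed.

Lemma Dn_tn_ge n : 4 / 3 * INR (4 * S n) <= Dn (4 * S n) (tn (4 * S n)).
Proof.
  rewrite Dn_tn. pose proof (pos_INR (4 * S n)).
  pose proof (leibniz_partial_sum_ge (2 * S n)). pose proof (leibniz_partial_sum_ge (S (2 * n))).
  nra.
Qed.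

Lemma node_ratio_fm_ends (m K n : nat) : sqrt (INR m) = 4 * INR K + 8 ->
  node_ratio (fm (INR m)) (4 * S n) 0 = 0 /\ node_ratio (fm (INR m)) (4 * S n) (2 * n + 2) = 0.
Proof.
  intro Hs. pose proof (zigzag_m_ge _ _ Hs). pose proof (pos_INR K). unfold node_ratio. split.
  - rewrite (fm_le_1 _ K Hs) by (simpl INR; lra). unfold Rdiv; ring.
  - replace (2 * INR (2 * n + 2) / INR (4 * S n)) with 1
      by (rewrite INR_4S, plus_INR, mult_INR; simpl (INR 2); field; pose proof (pos_INR n); lra).
    rewrite (fm_outside _ K Hs) by lra. unfold Rdiv; ring.
Qed.

Lemma Nn_fm_tn_ge (m K M : nat) : sqrt (INR m) = 4 * INR K + 8 -> (1 <= M)%nat ->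
  -1 <= Nn (4 * m * M) (fm (INR m)) (tn (4 * m * M)).
Proof.
  intros Hs HM. pose proof (zigzag_m_pos _ _ Hs) as Hm.
  assert (HMR : 1 <= INR M) by (apply (le_INR 1); exact HM).
  assert (Hm1 : (1 <= m)%nat) by (destruct m; [simpl in Hm; lra | lia]).
  pose proof (fun r => node_ratio_second_diff_le m K M r Hs HM) as Hdiff.
  assert (HN : INR (4 * m * M) = 4 * INR m * INR M) by (rewrite !mult_INR; simpl; ring).
  assert (HmM : (m * M = S (m * M - 1))%nat) by nia.
  set (n := (m * M - 1)%nat) in HmM.
  replace (4 * m * M)%nat with (4 * S n)%nat in * by lia.
  set (N := INR (4 * S n)) in *. set (E := / INR m + 2 / N) in *.
  assert (HEN : E * N = 4 * INR M + 2) by (unfold E; rewrite HN; field; lra).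
  assert (HN0 : 0 < N) by (rewrite HN; nra).
  assert (HE : 0 <= E).
  { unfold E. pose proof (Rinv_0_lt_compat _ Hm). pose proof (Rdiv_lt_0_compat 2 N).
    lra. }
  set (T := node_ratio (fm (INR m)) (4 * S n)) in *.
  rewrite Nn_tn by (intros x Hx; apply (fm_le_1 _ K Hs); nra).
  fold N T. destruct (node_ratio_fm_ends m K n Hs) as [HT0 HTn]. fold T in HT0, HTn.
  assert (Hw0 : tail_weight M 0 = / (4 * INR M - 1))
    by (unfold tail_weight; rewrite Nat.max_r by lia; reflexivity).
  assert (HwS : 0 <= tail_weight M (S n)).
  { unfold tail_weight. apply Rlt_le, Rinv_0_lt_compat.
    pose proof (le_INR _ _ (Nat.le_max_r (S n) M)). lra. }
  pose proof (alt_sum_ge_of_second_diff T (fun r => E * tail_weight M r) n) as Halt.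
  specialize (Halt ltac:(intro r; specialize (Hdiff r); cbv zeta in Hdiff; lra)).
  rewrite HT0, HTn, Hw0 in Halt.
  set (alt := sum_f_R0 _ (S (2 * n))) in *.
  assert (Halt2 : - (E * / (4 * INR M - 1)) <= 2 * alt)
    by (pose proof (Rmult_le_pos _ _ HE HwS); lra).
  assert (Hratio : E * / (4 * INR M - 1) * N <= 2).
  { replace (E * / (4 * INR M - 1) * N) with ((4 * INR M + 2) / (4 * INR M - 1))
      by (rewrite <- HEN; field; lra).
    apply Rdiv_le_iff; lra. }
  nra.
Qed.

Theorem Bn_fm_tn_ge (m K M : nat) : sqrt (INR m) = 4 * INR K + 8 -> (1 <= M)%nat ->
  fm (INR m) (tn (4 * m * M)) = 0 /\
  Bn (4 * m * M) (fm (INR m)) (tn (4 * m * M)) >= - (9 / (8 * INR (4 * m * M))).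
Proof.
  intros Hs HM. pose proof (zigzag_m_pos _ _ Hs) as Hm.
  assert (HMR : 1 <= INR M) by (apply (le_INR 1); exact HM).
  pose proof (Nn_fm_tn_ge m K M Hs HM) as HNn.
  assert (HN : INR (4 * m * M) = 4 * INR m * INR M) by (rewrite !mult_INR; simpl; ring).
  assert (HmM : (m * M = S (m * M - 1))%nat) by (destruct m; [simpl in Hm; lra | nia]).
  replace (4 * m * M)%nat with (4 * S (m * M - 1))%nat in * by lia.
  set (n := (m * M - 1)%nat) in *. set (N := INR (4 * S n)) in *.
  assert (HN0 : 0 < N) by (rewrite HN; nra).
  split.
  - apply (fm_le_1 _ K Hs). unfold tn. fold N.
    replace (INR m * (1 / N)) with (/ (4 * INR M)) by (rewrite HN; field; lra).
    rewrite <- Rinv_1. apply Rinv_le_contravar; lra.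
  - unfold Bn. rewrite dec_false by (intros [k [_ Hk]]; exact (tn_not_node n k Hk)).
    pose proof (Dn_tn_ge n) as HDn. fold N in HDn.
    set (a := Nn _ _ _) in *. set (d := Dn _ _) in *.
    assert (Hd : 0 < d) by lra.
    assert (Ha : -1 / d <= a / d)
      by (unfold Rdiv; apply Rmult_le_compat_r; [left; apply Rinv_0_lt_compat |]; lra).
    assert (Hinv : / d <= / (4 / 3 * N)) by (apply Rinv_le_contravar; lra).
    replace (/ (4 / 3 * N)) with (3 / 4 * / N) in Hinv by (field; lra).
    replace (-1 / d) with (- / d) in Ha by (field; lra).
    replace (9 / (8 * N)) with (9 / 8 * / N) by (field; lra).
    pose proof (Rinv_0_lt_compat _ HN0). lra.
Qed.

Lemma ni_S i : ni (S i) = (ni i * ni i)%nat.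
Proof. unfold ni. rewrite Nat.pow_succ_r', <- Nat.pow_add_r. f_equal. lia. Qed.

Lemma sqrt_ni_S i : sqrt (INR (ni (S i))) = INR (ni i).
Proof. rewrite ni_S, mult_INR. apply sqrt_square, pos_INR. Qed.

Lemma ni_eq_4K_8 i : (2 <= i)%nat -> exists K, ni i = (4 * K + 8)%nat.
Proof.
  intro Hi. exists (2 ^ (2 ^ i - 2) - 2)%nat.
  assert (H4 : (4 <= 2 ^ i)%nat) by (apply (Nat.pow_le_mono_r 2 2); lia).
  assert (H2 : (4 <= 2 ^ (2 ^ i - 2))%nat) by (apply (Nat.pow_le_mono_r 2 2); lia).
  unfold ni. replace (2 ^ i)%nat with (2 + (2 ^ i - 2))%nat at 1 by lia.
  rewrite Nat.pow_add_r. simpl (2 ^ 2)%nat. lia.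
Qed.

Lemma ni_eq_4_mul i j : (1 <= i < j)%nat -> exists M, (1 <= M)%nat /\ ni j = (4 * ni i * M)%nat.
Proof.
  intros Hij. exists (2 ^ (2 ^ j - 2 ^ i - 2))%nat. split.
  - apply Nat.le_succ_l, Nat.neq_0_lt_0, Nat.pow_nonzero. lia.
  - assert (H2 : (2 <= 2 ^ i)%nat) by (apply (Nat.pow_le_mono_r 2 1); lia).
    assert (Hji : (2 * 2 ^ i <= 2 ^ j)%nat)
      by (rewrite <- Nat.pow_succ_r'; apply Nat.pow_le_mono_r; lia).
    unfold ni. replace (2 ^ j)%nat with (2 + 2 ^ i + (2 ^ j - 2 ^ i - 2))%nat at 1 by lia.
    rewrite !Nat.pow_add_r. simpl (2 ^ 2)%nat. ring.
Qed.

Theorem lemma1 (i j : nat) (hi : (100 <= i)%nat) (hij : (i < j)%nat) :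
  fm (INR (ni i)) (tn (ni j)) = 0 /\
  Bn (ni j) (fm (INR (ni i))) (tn (ni j)) >= - (9 / (8 * INR (ni j))).
Proof.
  destruct (ni_eq_4_mul i j) as [M [HM ->]]; [lia |].
  destruct i as [| i]; [lia |].
  destruct (ni_eq_4K_8 i) as [K HK]; [lia |].
  apply (Bn_fm_tn_ge _ K M); [| exact HM].
  rewrite sqrt_ni_S, HK, plus_INR, mult_INR. simpl. ring.
Qed.
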